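(* Let $A$ be a finite-dimensional $k$-algebra and $Y\in\operatorname{mod}A$ such that every short exact sequence $0\to X\to Y'\to S\to0$ with $Y'$ a submodule of $Y$ and $S$ a simple $A$-module is perfect exact. Then $Y^\ast=0$ if and only if $S^\ast=0$ for every composition factor $S$ of $Y$.
   Context: $\operatorname{mod}A$ finitely generated right modules; $(-)^\ast=\operatorname{Hom}_A(-,A)$. A short exact sequence $0\to X\to Y\to Z\to0$ is perfect exact if $0\to Z^\ast\to Y^\ast\to X^\ast\to0$ is exact. *)

From HB Require Import structures.
From mathcomp Require Import all_boot all_order all_algebra falgebra.
Set Implicit Arguments. Unset Strict Implicit. Unset Printing Implicit Defensive.
Import GRing.Theory.
Local Open Scope ring_scope.

(* Finitely generated right modules over a finite-dimensional k-algebra A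
   (A : falgType k).  Such modules are exactly the finite-dimensional
   k-vector spaces with a unital, associative, k-bilinear right A-action. *)
Record rmod (k : fieldType) (A : falgType k) := RMod {
  rcar :> vectType k;
  ract : rcar -> A -> rcar;
  ract_linl : forall (a : A) (c : k) (m1 m2 : rcar),
      ract (c *: m1 + m2) a = c *: ract m1 a + ract m2 a;
  ract_linr : forall (m : rcar) (c : k) (a1 a2 : A),
      ract m (c *: a1 + a2) = c *: ract m a1 + ract m a2;
  ract1 : forall m : rcar, ract m 1 = m;
  ractA : forall (m : rcar) (a b : A), ract (ract m a) b = ract m (a * b)
}.
Arguments ract {k A} r _ _.

Section Modules.
Variables (k : fieldType) (A : falgType k).

Definition regmod : rmod A.
Proof.
refine (@RMod k A A (fun x a => x * a) _ _ _ _).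
- by move=> a c m1 m2; rewrite mulrDl scalerAl.
- by move=> m c a1 a2; rewrite mulrDr scalerAr.
- exact: mulr1.
- by move=> m a b; rewrite mulrA.
Defined.

Definition is_hom (M N : rmod A) (f : 'Hom(M, N)) : Prop :=
  forall (m : M) (a : A), f (ract M m a) = ract N (f m) a.

(* M^* = Hom_A(M, A);  M^* = 0 means every A-linear map M -> A is zero. *)
Definition dual_zero (M : rmod A) : Prop :=
  forall phi : 'Hom(M, regmod), is_hom phi -> phi = 0.

Definition is_submod (M : rmod A) (U : {vspace M}) : Prop :=
  forall (m : M) (a : A), m \in U -> ract M m a \in U.

Section Submod.
Variables (M : rmod A) (U : {vspace M}) (hU : is_submod U).

Definition subact (u : subvs_of U) (a : A) : subvs_of U :=
  vsproj U (ract M (vsval u) a).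

Lemma subact_val u a : vsval (subact u a) = ract M (vsval u) a.
Proof. by rewrite /subact vsprojK //; apply: hU; exact: subvsP. Qed.

Definition submod : rmod A.
Proof.
refine (@RMod k A (subvs_of U) subact _ _ _ _).
- move=> a c m1 m2; apply: val_inj.
  by rewrite /= !(subact_val, linearD, linearZ) /= ract_linl.
- move=> m c a1 a2; apply: val_inj.
  by rewrite /= !(subact_val, linearD, linearZ) /= ract_linr.
- by move=> m; apply: val_inj; rewrite /= subact_val ract1.
- by move=> m a b; apply: val_inj; rewrite /= !subact_val ractA.
Defined.
End Submod.

Definition simple_mod (S : rmod A) : Prop :=
  (fullv : {vspace S}) != 0%VS /\
  forall U : {vspace S}, is_submod U -> U = 0%VS \/ U = fullv.

Definition short_exact (X Y Z : rmod A) (f : 'Hom(X, Y)) (g : 'Hom(Y, Z)) :=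
  [/\ is_hom f, is_hom g, lker f = 0%VS, limg g = fullv & limg f = lker g].

(* The dual sequence 0 -> Z^* --g^*--> Y^* --f^*--> X^* -> 0 is exact,
   where g^*(phi) = phi o g and f^*(psi) = psi o f. *)
Definition perfect_exact (X Y Z : rmod A) (f : 'Hom(X, Y)) (g : 'Hom(Y, Z)) :=
  [/\ (forall phi : 'Hom(Z, regmod), is_hom phi -> (phi \o g)%VF = 0 -> phi = 0),
      (forall psi : 'Hom(Y, regmod), is_hom psi ->
          ((psi \o f)%VF = 0 <->
           exists2 phi : 'Hom(Z, regmod), is_hom phi & psi = (phi \o g)%VF))
    & (forall chi : 'Hom(X, regmod), is_hom chi ->
          exists2 psi : 'Hom(Y, regmod), is_hom psi & chi = (psi \o f)%VF)].

(* Composition series of M: 0 = M_0 < M_1 < ... < M_n = M, submodules,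
   with each M_{i+1}/M_i simple (i.e. M_i is a maximal proper submodule of
   M_{i+1}). *)
Definition comp_series (M : rmod A) (s : seq {vspace M}) : Prop :=
  [/\ (0 < size s)%N, nth 0%VS s 0 = 0%VS, nth 0%VS s (size s).-1 = fullv,
      (forall i, (i < size s)%N -> is_submod (nth 0%VS s i))
    & (forall i, (i.+1 < size s)%N ->
        (nth 0%VS s i <= nth 0%VS s i.+1)%VS /\ nth 0%VS s i != nth 0%VS s i.+1 /\
        forall W : {vspace M}, is_submod W ->
          (nth 0%VS s i <= W)%VS -> (W <= nth 0%VS s i.+1)%VS ->
          W = nth 0%VS s i \/ W = nth 0%VS s i.+1)].

(* S is isomorphic to V/U (U <= V submodules of M): there is a k-linear
   g : M -> S, A-linear on V, mapping V onto S with kernel (in V) exactly U. *)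
Definition subquot_iso (M S : rmod A) (U V : {vspace M}) (g : 'Hom(M, S)) :=
  [/\ forall (m : M) (a : A), m \in V -> g (ract M m a) = ract S (g m) a,
      (g @: V)%VS = fullv
    & (lker g :&: V)%VS = U].

Definition comp_factor (M S : rmod A) : Prop :=
  exists s : seq {vspace M}, comp_series s /\
  exists i, (i.+1 < size s)%N /\
  exists g : 'Hom(M, S), subquot_iso (nth 0%VS s i) (nth 0%VS s i.+1) g.

End Modules.

From HB Require Import structures.
From mathcomp Require Import all_boot all_order all_algebra falgebra.
From mathcomp Require Import zify.
From Stdlib Require Import Classical.
Set Implicit Arguments. Unset Strict Implicit. Unset Printing Implicit Defensive.
Import GRing.Theory.
Local Open Scope ring_scope.

(* (=>) Let 0 = M_0 < ... < M_n = Y be a composition series.  For a step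
   M_i < M_{i+1} with simple factor S = M_{i+1}/M_i, the sequence
   0 -> M_i -> M_{i+1} -> S -> 0 is perfect exact by hypothesis, so
   S^* embeds in M_{i+1}^* and M_i^* is a quotient of M_{i+1}^*.  Hence a
   descending induction from M_n = Y shows M_i^* = 0 for all i, and then
   S^* = 0 for every composition factor.

   (<=) This direction needs no hypothesis.  A nonzero A-linear
   phi : Y -> A_A has kernel K < Y; choose a submodule R minimal over K.
   Some composition series passes through K < R, and R/K is isomorphic to
   the submodule phi(R) of A_A, whose inclusion into A is a nonzero element
   of (R/K)^*. *)

Section RightModules.
Variables (k : fieldType) (A : falgType k).

Lemma ractD (M : rmod A) (m1 m2 : M) a :
  ract M (m1 + m2) a = ract M m1 a + ract M m2 a.
Proof. by have := ract_linl (r:=M) a 1 m1 m2; rewrite !scale1r. Qed.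

Lemma ract0 (M : rmod A) a : ract M 0 a = 0.
Proof. by apply/(addrI (ract M 0 a)); rewrite -ractD !addr0. Qed.

Lemma ractB (M : rmod A) (m1 m2 : M) a :
  ract M (m1 - m2) a = ract M m1 a - ract M m2 a.
Proof.
apply/(addrI (ract M m2 a)); rewrite -ractD addrC subrK.
by rewrite addrC subrK.
Qed.

Lemma ractZ (M : rmod A) c (m : M) a : ract M (c *: m) a = c *: ract M m a.
Proof. by have := ract_linl (r:=M) a c m 0; rewrite !addr0 ract0 addr0. Qed.

Lemma submod0 (M : rmod A) : is_submod (0%VS : {vspace M}).
Proof. by move=> m a; rewrite memv0 => /eqP ->; rewrite ract0 mem0v. Qed.

Lemma submodf (M : rmod A) : is_submod (fullv : {vspace M}).
Proof. by move=> m a _; rewrite memvf. Qed.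

Lemma submod_img (M N : rmod A) (phi : 'Hom(M, N)) (V : {vspace M}) :
  is_hom phi -> is_submod V -> is_submod (phi @: V).
Proof.
by move=> hphi hV _ a /memv_imgP [v vV ->]; rewrite -hphi memv_img ?hV.
Qed.

Lemma submod_ker (M N : rmod A) (phi : 'Hom(M, N)) :
  is_hom phi -> is_submod (lker phi).
Proof. by move=> hphi m a; rewrite !memv_ker hphi => /eqP ->; rewrite ract0. Qed.

Lemma hom_comp (M N P : rmod A) (f : 'Hom(M, N)) (g : 'Hom(N, P)) :
  is_hom f -> is_hom g -> is_hom (g \o f)%VF.
Proof. by move=> hf hg m a; rewrite !comp_lfunE hf hg. Qed.

Definition incl (M : rmod A) (U : {vspace M}) (hU : is_submod U) :
  'Hom(submod hU, M) := linfun vsval.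

Lemma incl_hom (M : rmod A) (U : {vspace M}) (hU : is_submod U) :
  is_hom (incl hU).
Proof. by move=> m a; rewrite !lfunE /= subact_val. Qed.
Arguments incl_hom {M U} hU.

(* The quotient V/U of submodules U <= V, modelled on a k-complement C of U
   in V, with action (c, a) |-> pi (c.a) where pi projects V onto C along U. *)
Section Quotient.
Variables (M : rmod A) (U V : {vspace M}).
Hypotheses (hU : is_submod U) (hV : is_submod V) (sUV : (U <= V)%VS).

Let C := (V :\: U)%VS.
Let pi := addv_pi1 V U.

(* pi kills U, fixes C and satisfies w - pi w \in U on V; as U is a
   submodule, pi (pi w . a) = pi (w . a), which makes the induced action
   associative. *)
Let VU_V : (V + U = V)%VS.
Proof. by apply/addv_idPl. Qed.

Let pi_U u : u \in U -> pi u = 0.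
Proof.
move=> uU; have uVU : u \in (V + U)%VS by rewrite VU_V (subvP sUV).
have := addv_pi1_pi2 uVU; rewrite addv_pi2_id // => /(congr1 (fun x => x - u)).
by rewrite addrK subrr.
Qed.

Let pi_C c : c \in C -> pi c = c.
Proof. by move=> cC; apply: daddv_pi_id; rewrite ?capv_diff. Qed.

Let pi_V w : w \in V -> w - pi w \in U.
Proof.
move=> wV; have wVU : w \in (V + U)%VS by rewrite VU_V.
have E := addv_pi1_pi2 wVU.
by rewrite -{1}E addrC addKr memv_pi2.
Qed.

Let pi_act w a : w \in V -> pi (ract M (pi w) a) = pi (ract M w a).
Proof.
move=> wV; apply/eqP; rewrite -subr_eq0 -linearB /= -ractB; apply/eqP/pi_U.
by apply: hU; rewrite -opprB memvN pi_V.
Qed.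

Let C_V c : c \in C -> c \in V.
Proof. exact/subvP/diffvSl. Qed.

Definition quotact (c : subvs_of C) (a : A) : subvs_of C :=
  vsproj C (pi (ract M (vsval c) a)).

Let quotactE c a : vsval (quotact c a) = pi (ract M (vsval c) a).
Proof. by rewrite vsprojK ?memv_pi. Qed.

Definition quotmod : rmod A.
Proof.
refine (@RMod k A (subvs_of C) quotact _ _ _ _).
- move=> a c m1 m2; apply: val_inj => /=.
  by rewrite !quotactE !linearD !linearZ /= ractD ractZ !linearD !linearZ.
- move=> m c a1 a2; apply: val_inj => /=.
  by rewrite !quotactE ract_linr !linearD !linearZ.
- by move=> m; apply: val_inj; rewrite /= quotactE ract1 pi_C // subvsP.
- move=> m a b; apply: val_inj; rewrite /= !quotactE pi_act ?ractA //.
  by apply/hV/C_V/subvsP.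
Defined.

Definition quotmap : 'Hom(M, quotmod) := (linfun (vsproj C) \o pi)%VF.

Let quotmapE m : quotmap m = vsproj C (pi m).
Proof. by rewrite comp_lfunE lfunE. Qed.

Lemma quotmap_subquot : subquot_iso U V quotmap.
Proof.
split.
- by move=> m a mV; rewrite !quotmapE /= /quotact vsprojK ?memv_pi // pi_act.
- apply/vspaceP => s; rewrite memvf.
  have -> : s = quotmap (vsval s) by rewrite quotmapE pi_C ?subvsP // vsvalK.
  by apply/memv_img/C_V/subvsP.
- apply/vspaceP => x; rewrite memv_cap memv_ker quotmapE.
  apply/idP/idP => [/andP [/eqP h0 xV] | xU].
  + have pi0 : pi x = 0 by rewrite -(vsprojK (memv_pi _ _ x)) h0 linear0.
    by have := pi_V xV; rewrite pi0 subr0.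
  + by rewrite pi_U // linear0 eqxx (subvP sUV).
Qed.

End Quotient.

Definition imgmap (M N : rmod A) (phi : 'Hom(M, N)) (V : {vspace M})
  (hW : is_submod (phi @: V)) : 'Hom(M, submod hW) :=
  (linfun (vsproj (phi @: V)) \o phi)%VF.

Lemma imgmap_subquot (M N : rmod A) (phi : 'Hom(M, N)) (V : {vspace M})
  (hW : is_submod (phi @: V)) :
  is_hom phi -> subquot_iso (lker phi :&: V) V (imgmap hW).
Proof.
move=> hphi; have E m : imgmap hW m = vsproj (phi @: V) (phi m).
  by rewrite comp_lfunE lfunE.
split.
- by move=> m a mV; rewrite !E /= /subact vsprojK ?memv_img // hphi.
- apply/vspaceP => s; rewrite memvf.
  have /memv_imgP [v vV Es] : vsval s \in (phi @: V)%VS by apply: subvsP.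
  have -> : s = imgmap hW v by rewrite E -Es vsvalK.
  exact: memv_img.
- apply/vspaceP => x; rewrite !memv_cap !memv_ker E.
  apply: andb_id2r => xV; apply/idP/idP => [/eqP h0 | /eqP ->].
  + by rewrite -(vsprojK (memv_img phi xV)) h0 linear0.
  + by rewrite linear0.
Qed.

(* A subquotient V/U with U maximal in V is simple: submodules of V/U
   correspond to submodules between U and V via the preimage. *)
Lemma subquot_simple (M S : rmod A) (U V : {vspace M}) (g : 'Hom(M, S)) :
  is_submod V -> (U <= V)%VS -> U != V ->
  (forall W : {vspace M}, is_submod W -> (U <= W)%VS -> (W <= V)%VS ->
     W = U \/ W = V) ->
  subquot_iso U V g -> simple_mod S.
Proof.
move=> hV sUV nUV maxU [ghom gV gK].
have onto s : exists2 v, v \in V & s = g v by apply/memv_imgP; rewrite gV memvf.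
have gU x : x \in V -> (x \in U) = (g x == 0).
  by move=> xV; rewrite -gK memv_cap memv_ker xV andbT.
split.
- apply: contraNneq nUV => S0; apply/eqP/vspaceP => x.
  apply/idP/idP => [/(subvP sUV) // | xV]; rewrite gU //.
  by have := memv_img g xV; rewrite gV S0 memv0.
- move=> W hW; pose W' := (V :&: g @^-1: W)%VS.
  have W'P x : (x \in W') = (x \in V) && (g x \in W).
    by rewrite memv_cap memv_preim.
  have hW' : is_submod W'.
    by move=> m a; rewrite !W'P => /andP [mV mW]; rewrite hV //= ghom ?hW.
  have sUW' : (U <= W')%VS.
    apply/subvP => x xU; have xV := subvP sUV x xU.
    by rewrite W'P xV (eqP (_ : g x == 0)) ?mem0v // -gU.
  case: (maxU W' hW' sUW' (capvSl _ _)) => EW; [left | right];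
    apply/vspaceP => w; have [v vV ->] := onto w.
  + rewrite memv0 -gU //; apply/idP/idP => [gvW | /(subvP sUW')].
      by rewrite -EW W'P vV.
    by rewrite W'P => /andP [].
  + by move: vV; rewrite -EW W'P memvf => /andP [].
Qed.

(* For a perfect exact sequence 0 -> X -> Y -> Z -> 0, Y^* = 0 forces
   X^* = 0, as X^* is a quotient of Y^*, and Z^* = 0, as Z^* embeds
   in Y^*. *)
Lemma perfect_dual_zero (X Y Z : rmod A) (f : 'Hom(X, Y)) (g : 'Hom(Y, Z)) :
  is_hom g -> perfect_exact f g -> dual_zero Y -> dual_zero X /\ dual_zero Z.
Proof.
move=> hg [g_inj _ f_onto] hY; split.
- move=> chi hchi; have [psi hpsi ->] := f_onto chi hchi.
  by rewrite (hY psi hpsi) comp_lfun0l.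
- by move=> phi hphi; apply/g_inj/hY/hom_comp.
Qed.

Definition subincl (M : rmod A) (U V : {vspace M})
  (hU : is_submod U) (hV : is_submod V) : 'Hom(submod hU, submod hV) :=
  (linfun (vsproj V) \o incl hU)%VF.

Lemma subquot_short_exact (M S : rmod A) (U V : {vspace M})
  (hU : is_submod U) (hV : is_submod V) (g : 'Hom(M, S)) :
  (U <= V)%VS -> subquot_iso U V g ->
  short_exact (subincl hU hV) (g \o incl hV)%VF.
Proof.
move=> sUV [ghom gV gK].
have fE x : subincl hU hV x = vsproj V (vsval x).
  by rewrite comp_lfunE !lfunE.
have gE y : (g \o incl hV)%VF y = g (vsval y) by rewrite comp_lfunE lfunE.
have U_V (x : subvs_of U) : vsval x \in V by apply/(subvP sUV)/subvsP.
have gU x : x \in V -> (x \in U) = (g x == 0).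
  by move=> xV; rewrite -gK memv_cap memv_ker xV andbT.
split.
- by move=> x a; rewrite !fE /= (subact_val hU) /subact vsprojK ?U_V.
- by move=> y a; rewrite !gE /= (subact_val hV) ghom // subvsP.
- apply/eqP/lker0P => x y; rewrite !fE => /(congr1 vsval).
  by rewrite !vsprojK //; apply: val_inj.
- apply/vspaceP => s; rewrite memvf.
  have /memv_imgP [v vV ->] : s \in (g @: V)%VS by rewrite gV memvf.
  have -> : g v = (g \o incl hV)%VF (vsproj V v) by rewrite gE vsprojK.
  by rewrite memv_img ?memvf.
- apply/vspaceP => y; rewrite memv_ker gE -gU ?subvsP //.
  apply/memv_imgP/idP => [[x _ ->] | yU].
    by rewrite fE vsprojK ?subvsP.
  by exists (vsproj U (vsval y)); rewrite ?memvf // fE vsprojK // vsvalK.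
Qed.

Definition simple_quotients_perfect (Y : rmod A) : Prop :=
  forall (U : {vspace Y}) (hU : is_submod U) (X S : rmod A)
         (f : 'Hom(X, submod hU)) (g : 'Hom(submod hU, S)),
    simple_mod S -> short_exact f g -> perfect_exact f g.

Lemma step_dual_zero (Y S : rmod A) (U V : {vspace Y})
  (hU : is_submod U) (hV : is_submod V) (g : 'Hom(Y, S)) :
  simple_quotients_perfect Y -> simple_mod S -> (U <= V)%VS ->
  subquot_iso U V g -> dual_zero (submod hV) ->
  dual_zero (submod hU) /\ dual_zero S.
Proof.
move=> hperf simS sUV gsq hDV.
have ex := subquot_short_exact hU hV sUV gsq.
have [_ ghom _ _ _] := ex.
exact: perfect_dual_zero ghom (hperf V hV _ _ _ _ simS ex) hDV.
Qed.
Arguments step_dual_zero {Y S U V} hU hV {g}.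

Lemma full_dual_zero (Y : rmod A) (U : {vspace Y}) (hU : is_submod U) :
  U = fullv -> dual_zero Y -> dual_zero (submod hU).
Proof.
move=> EU hY phi hphi.
pose psi : 'Hom(Y, regmod A) := (phi \o linfun (vsproj U))%VF.
have psiE m : psi m = phi (vsproj U m) by rewrite comp_lfunE lfunE.
have hpsi : is_hom psi.
  by move=> m a; rewrite !psiE -hphi /= /subact vsprojK // EU memvf.
apply/lfunP => u; rewrite -[u]vsvalK -psiE (hY psi hpsi) !lfunE /= //.
Qed.

Lemma series_dual_zero (Y : rmod A) (s : seq {vspace Y}) :
  simple_quotients_perfect Y -> dual_zero Y -> comp_series s ->
  forall j (hj : is_submod (nth 0%VS s j)), (j < size s)%N ->
  dual_zero (submod hj).
Proof.
move=> hperf hY [_ _ s_top s_sub s_step] j.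
have [n] := ubnP (size s - j); elim: n j => // n IH j lt_n hj lt_j.
case: (ltnP j.+1 (size s)) => [lt_j1 | le_sj1].
- have [sub_j [ne_j max_j]] := s_step j lt_j1.
  have hj1 := s_sub j.+1 lt_j1.
  have gsq := quotmap_subquot hj hj1 sub_j.
  have simS := subquot_simple hj1 sub_j ne_j max_j gsq.
  have hD1 : dual_zero (submod hj1) by apply: IH => //; lia.
  by have [] := step_dual_zero hj hj1 hperf simS sub_j gsq hD1.
- by apply: full_dual_zero hY; rewrite -s_top; congr nth; lia.
Qed.
Arguments series_dual_zero {Y s} hperf hY cs {j} hj.

Lemma comp_factors_dual_zero (Y : rmod A) :
  simple_quotients_perfect Y -> dual_zero Y ->
  forall S : rmod A, comp_factor Y S -> dual_zero S.
Proof.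
move=> hperf hY S [s [cs [i [lt_i [g gsq]]]]].
have [_ _ _ s_sub s_step] := cs.
have [sub_i [ne_i max_i]] := s_step i lt_i.
have hi : is_submod (nth 0%VS s i) by apply: s_sub; lia.
have hi1 := s_sub i.+1 lt_i.
have simS := subquot_simple hi1 sub_i ne_i max_i gsq.
have hD1 := series_dual_zero hperf hY cs hi1 lt_i.
by have [] := step_dual_zero hi hi1 hperf simS sub_i gsq hD1.
Qed.

Definition max_step (M : rmod A) (P Q : {vspace M}) : Prop :=
  (P <= Q)%VS /\ P != Q /\
  forall W : {vspace M}, is_submod W -> (P <= W)%VS -> (W <= Q)%VS ->
    W = P \/ W = Q.

Definition step_chain (M : rmod A) (t : seq {vspace M}) : Prop :=
  (forall i, (i < size t)%N -> is_submod (nth 0%VS t i)) /\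
  (forall i, (i.+1 < size t)%N -> max_step (nth 0%VS t i) (nth 0%VS t i.+1)).

Lemma step_chain_cons (M : rmod A) (P : {vspace M}) (t : seq {vspace M}) :
  is_submod P -> max_step P (nth 0%VS t 0) -> step_chain t ->
  step_chain (P :: t).
Proof. by move=> hP stepP [t_sub t_step]; split=> [[|i] | [|i]] /= lt_i; auto. Qed.

(* If P < Q with Q a submodule, there is a composition step P < R with
   R <= Q: by induction on dim Q, replace Q by a submodule strictly between
   P and Q as long as one exists. *)
Lemma max_step_exists (M : rmod A) (P Q : {vspace M}) :
  is_submod Q -> (P <= Q)%VS -> P != Q ->
  exists2 R, is_submod R & (R <= Q)%VS /\ max_step P R.
Proof.
have [n] := ubnP (\dim Q); elim: n Q => // n IH Q lt_Q hQ sPQ nPQ.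
case: (classic (exists W : {vspace M},
         [/\ is_submod W, (P <= W)%VS, (W <= Q)%VS, W != P & W != Q])).
- case=> W [hW sPW sWQ nWP nWQ].
  have lt_WQ : (\dim W < \dim Q)%N by move: nWQ; rewrite eqEdim sWQ -ltnNge.
  have lt_Wn : (\dim W < n)%N by lia.
  have nPW : P != W by rewrite eq_sym.
  have [R hR [sRW stepR]] := IH W lt_Wn hW sPW nPW.
  by exists R => //; split=> //; apply: subv_trans sWQ.
- move=> noW; exists Q => //; split=> //; split=> //; split=> // W hW sPW sWQ.
  case: (eqVneq W P) => [-> | nWP]; first by left.
  case: (eqVneq W Q) => [-> | nWQ]; first by right.
  by exfalso; apply: noW; exists W.
Qed.

Lemma chain_extend (M : rmod A) (t : seq {vspace M}) (P : {vspace M}) :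
  step_chain t -> (0 < size t)%N -> is_submod P -> (P <= nth 0%VS t 0)%VS ->
  exists2 c, step_chain (c ++ t) & nth 0%VS (c ++ t) 0 = P.
Proof.
move=> ct t_gt0; set Q := nth 0%VS t 0.
have hQ : is_submod Q by apply: ct.1.
have [n] := ubnP (\dim Q - \dim P); elim: n P => // n IH P lt_n hP sPQ.
case: (eqVneq P Q) => [-> | nPQ]; first by exists [::].
have [R hR [sRQ stepPR]] := max_step_exists hQ sPQ nPQ.
have [sPR [nPR _]] := stepPR.
have lt_PR : (\dim P < \dim R)%N by move: nPR; rewrite eqEdim sPR -ltnNge.
have le_RQ := dimvS sRQ.
have [|c cc cR] := IH R _ hR sRQ; first by lia.
by exists (P :: c) => //; apply: step_chain_cons; rewrite ?cR.
Qed.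

Lemma comp_series_through (M : rmod A) (K R : {vspace M}) :
  is_submod K -> is_submod R -> max_step K R ->
  exists2 s, comp_series s &
    exists i, [/\ (i.+1 < size s)%N, nth 0%VS s i = K & nth 0%VS s i.+1 = R].
Proof.
move=> hK hR stepKR.
have top : step_chain [:: (fullv : {vspace M})].
  by split=> [[|i] | i] //= _; apply: submodf.
have [c2 cc2 c2R] := chain_extend top isT hR (subvf R).
have cK : step_chain (K :: c2 ++ [:: fullv]).
  by apply: step_chain_cons; rewrite ?c2R.
have [c1 [cc1_sub cc1_step] c10] := chain_extend cK isT (@submod0 M) (sub0v K).
exists (c1 ++ K :: c2 ++ [:: fullv]).
  split=> //; first by rewrite size_cat /=; lia.
  by rewrite -cat_cons catA nth_cat size_cat /= addn1 ltnn subnn.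
exists (size c1); split; first by rewrite size_cat /= size_cat /=; lia.
- by rewrite nth_cat ltnn subnn.
- by rewrite nth_cat ltnNge leqnSn subSnn /= c2R.
Qed.

(* Direction (<=): a nonzero phi : Y -> A_A with kernel K gives, for a step
   K < R, the composition factor R/K ~ phi(R) <= A_A, whose inclusion into
   A is a nonzero element of its dual. *)
Lemma dual_zero_of_factors (Y : rmod A) :
  (forall S : rmod A, comp_factor Y S -> dual_zero S) -> dual_zero Y.
Proof.
move=> hS phi hphi; case: (eqVneq phi 0) => // phi_nz; exfalso.
have hK := submod_ker hphi.
have nKF : lker phi != fullv.
  apply: contra_neq phi_nz => EK; apply/lfunP => u; rewrite lfunE /=.
  by apply/eqP; rewrite -memv_ker EK memvf.
have [R hR [_ stepKR]] := max_step_exists (@submodf Y) (subvf _) nKF.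
have [s cs [i [lt_i sK sR]]] := comp_series_through hK hR stepKR.
have [sKR [nKR _]] := stepKR.
have hW := submod_img hphi hR.
have gsq : subquot_iso (lker phi) R (imgmap hW).
  by have := imgmap_subquot hW hphi; rewrite (capv_idPl sKR).
have cf : comp_factor Y (submod hW).
  by exists s; split=> //; exists i; split=> //; exists (imgmap hW); rewrite sK sR.
have incl0 : incl hW = 0 := hS _ cf _ (incl_hom hW).
have /subvPn [x xR xK] : ~~ (R <= lker phi)%VS.
  by apply: contra nKR => sRK; rewrite eqEsubv sKR.
have : incl hW (imgmap hW x) = phi x.
  by rewrite lfunE comp_lfunE lfunE /= vsprojK ?memv_img.
by rewrite incl0 lfunE /= => /esym/eqP; rewrite -memv_ker (negbTE xK).
Qed.

End RightModules.

Unset Implicit Arguments.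

Theorem mainTheorem16 (k : fieldType) (A : falgType k) (Y : rmod A) :
  (forall (U : {vspace Y}) (hU : is_submod U) (X S : rmod A)
          (f : 'Hom(X, submod hU)) (g : 'Hom(submod hU, S)),
      simple_mod S -> short_exact f g -> perfect_exact f g) ->
  (dual_zero Y <-> forall S : rmod A, comp_factor Y S -> dual_zero S).
Proof.
move=> hperf; split.
- exact: comp_factors_dual_zero hperf.
- exact: dual_zero_of_factors.
Qed.
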